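(* Let $n=1$ and $k \in \{1,2\}$. Then $\mathcal{H}_{p,\beta, \frac{k}{3}, 0 }^{(l)}$ is spectrally similar to $\Delta^{(l-1)}_{p}$ with the functions \[ \phi_{p,\beta,\frac{k}{3},0}(z)=\frac{4 p \left(p - 1\right)}{4 p^{2} - \left( \beta + 2 z\right)^{2}} , \quad \quad \psi_{p,\beta, \frac{k}{3},0 }(z) = - \frac{\beta^{2} + 2 \beta p + \beta z - 2 p z - 2 p - 2 z^{2} + 2}{\beta + 2 p + 2 z}. \] The spectral decimation function $R_{p,\beta,\frac{k}{3},0 }$ and the exceptional set $\mathscr{E}_{p,\beta, \frac{k}{3},0}$ are given by \[ R_{p,\beta,\frac{k}{3},0 }(z) = \frac{\left( - \beta + 2 p - 2 z \right) \left(\beta^{2} + 2 \beta p + \beta z - 2 p z - 2 p - 2 z^{2} + 2\right)}{4 p \left(1-p\right)} , \quad \quad \mathscr{E}_{p,\beta, \frac{k}{3},0} = \left\{ - \frac{\beta}{2} - p, \ - \frac{\beta}{2} + p \right\}. \]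
   Context: Fix $p\in(0,1)$, $\beta\in\mathbb{R}$, $l\ge 1$. For $x\in\mathbb{Z}_+\setminus\{0\}$ let $m(x)$ be the largest $m$ with $3^m\mid x$, and set $p(x,x-1)=1-p$, $p(x,x+1)=p$ if $3^{-m(x)}x\equiv 1 \pmod 3$, and $p(x,x-1)=p$, $p(x,x+1)=1-p$ if $3^{-m(x)}x\equiv 2 \pmod 3$. On $V_l=\{0,1,\dots,3^l\}$ the level-$l$ self-similar almost Mathieu operator $\mathcal{H}^{(l)}_{p,\beta,\alpha,\theta}$ acts by $(\mathcal{H}^{(l)}f)(0)=\beta\cos(\theta)f(0)-f(1)$, $(\mathcal{H}^{(l)}f)(3^l)=\beta\cos(2\pi\alpha 3^l+\theta)f(3^l)-f(3^l-1)$, and for $0<x<3^l$, $(\mathcal{H}^{(l)}f)(x)=\beta\cos(2\pi\alpha x+\theta)f(x)-p(x,x-1)f(x-1)-p(x,x+1)f(x+1)$. The level-$l$ Laplacian $\Delta^{(l)}_p$ on $V_l$ is given by $(\Delta^{(l)}_pf)(0)=f(0)-f(1)$, $(\Delta^{(l)}_pf)(3^l)=f(3^l)-f(3^l-1)$, and $(\Delta^{(l)}_pf)(x)=f(x)-p(x,x-1)f(x-1)-p(x,x+1)f(x+1)$ for $0<x<3^l$. Here $\theta=0$, $\alpha=k/3$. Decompose $\mathcal{H}^{(l)}$ in block form $\begin{pmatrix}T & J^T\\ J & X\end{pmatrix}$ with respect to $\mathrm{span}\{\delta_v: v\equiv 0 \bmod 3\}\oplus\mathrm{span}\{\delta_v: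 v\not\equiv 0\bmod 3\}$. Spectral similarity of $\mathcal{H}^{(l)}$ to $\Delta^{(l-1)}_p$ (identified on the vertices $\equiv 0 \bmod 3$) with functions $\phi,\psi$ means that the Schur complement satisfies $T-z-J^T(X-z)^{-1}J=\phi(z)\Delta^{(l-1)}_p-\psi(z)I$ (equivalently $U^*(\mathcal{H}^{(l)}-z)^{-1}U=(\phi(z)\Delta^{(l-1)}_p-\psi(z))^{-1}$); the spectral decimation function is $R=\psi/\phi$ and the exceptional set is $\{z: z\in\sigma(X)\text{ or }\phi(z)=0\}$. *)

From HB Require Import structures.
From mathcomp Require Import all_boot all_order all_algebra.
From mathcomp Require Import all_classical all_reals all_analysis.
From mathcomp Require Import complex.
Set Implicit Arguments. Unset Strict Implicit. Unset Printing Implicit Defensive.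
Import Order.TTheory GRing.Theory Num.Theory.
Local Open Scope ring_scope.
Local Open Scope complex_scope.

Definition red3 (x : nat) : nat := x %/ 3 ^ logn 3 x.

Definition pdown {R : realType} (p : R) (x : nat) : R :=
  if (red3 x %% 3 == 1)%N then 1 - p else p.
Definition pup {R : realType} (p : R) (x : nat) : R :=
  if (red3 x %% 3 == 1)%N then p else 1 - p.

(* entry (x,y) of an operator on V_l = {0,...,N}, N = 3^l, of the form
   (Af)(x) = d(x) f(x) - [boundary / p(x,x+-1)-weighted neighbours] *)
Definition walk_ent {R : realType} (N : nat) (p : R) (d : nat -> R)
  (x y : nat) : R :=
  if x == y then d x
  else if x == 0%N then (if y == 1%N then -1 else 0)
  else if x == N then (if y == N.-1 then -1 else 0)
  else if y == x.-1 then - pdown p x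
  else if y == x.+1 then - pup p x
  else 0.

Definition Hmat {R : realType} (l : nat) (p beta alpha theta : R)
  : 'M[R]_((3 ^ l).+1) :=
  \matrix_(i, j) walk_ent (3 ^ l) p
     (fun x => beta * cos (2 * pi * alpha * x%:R + theta)) i j.

Definition Lapmat {R : realType} (l : nat) (p : R) : 'M[R]_((3 ^ l).+1) :=
  \matrix_(i, j) walk_ent (3 ^ l) p (fun _ => 1) i j.

Definition cplx {R : realType} {m n : nat} (A : 'M[R]_(m, n)) : 'M[R[i]]_(m, n) :=
  map_mx (fun x => x%:C) A.

(* index maps: vertices = 0 mod 3 (i |-> 3 i, i <= 3^(l-1)) and
   vertices <> 0 mod 3 (j |-> 3 (j/2) + 1 + (j mod 2), j < 2 * 3^(l-1)) *)
Definition vmult (l : nat) (i : 'I_((3 ^ l.-1).+1)) : 'I_((3 ^ l).+1) :=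
  inord (3 * i).
Definition vnon (l : nat) (j : 'I_(2 * 3 ^ l.-1)) : 'I_((3 ^ l).+1) :=
  inord (3 * (j %/ 2) + 1 + (j %% 2)).

(* block decomposition  H = [[T, B], [J, X]]  (B is the block written J^T
   in the paper) *)
Definition blkT {R : realType} l (H : 'M[R]_((3 ^ l).+1)) :=
  mxsub (@vmult l) (@vmult l) H.
Definition blkB {R : realType} l (H : 'M[R]_((3 ^ l).+1)) :=
  mxsub (@vmult l) (@vnon l) H.
Definition blkJ {R : realType} l (H : 'M[R]_((3 ^ l).+1)) :=
  mxsub (@vnon l) (@vmult l) H.
Definition blkX {R : realType} l (H : 'M[R]_((3 ^ l).+1)) :=
  mxsub (@vnon l) (@vnon l) H.

Definition schur {R : realType} l (H : 'M[R]_((3 ^ l).+1)) (z : R[i])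
  : 'M[R[i]]_((3 ^ l.-1).+1) :=
  cplx (blkT H) - z%:M
  - cplx (blkB H) *m invmx (cplx (blkX H) - z%:M) *m cplx (blkJ H).

Definition spectrally_similar_with {R : realType} l (H : 'M[R]_((3 ^ l).+1))
  (p : R) (phi psi : R[i] -> R[i]) (E : R[i] -> Prop) : Prop :=
  forall z, ~ E z ->
    schur H z = phi z *: cplx (Lapmat l.-1 p) - (psi z)%:M.

Definition exceptional {R : realType} l (H : 'M[R]_((3 ^ l).+1))
  (phi : R[i] -> R[i]) (z : R[i]) : Prop :=
  eigenvalue (cplx (blkX H)) z \/ phi z = 0.

Definition phi13 {R : realType} (p beta : R) (z : R[i]) : R[i] :=
  4 * p%:C * (p%:C - 1) / (4 * p%:C ^+ 2 - (beta%:C + 2 * z) ^+ 2).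
Definition psi13 {R : realType} (p beta : R) (z : R[i]) : R[i] :=
  - ((beta%:C ^+ 2 + 2 * beta%:C * p%:C + beta%:C * z - 2 * p%:C * z
      - 2 * p%:C - 2 * z ^+ 2 + 2) / (beta%:C + 2 * p%:C + 2 * z)).
Definition R13 {R : realType} (p beta : R) (z : R[i]) : R[i] :=
  (- beta%:C + 2 * p%:C - 2 * z)
  * (beta%:C ^+ 2 + 2 * beta%:C * p%:C + beta%:C * z - 2 * p%:C * z
     - 2 * p%:C - 2 * z ^+ 2 + 2)
  / (4 * p%:C * (1 - p%:C)).

From HB Require Import structures.
From mathcomp Require Import all_boot all_order all_algebra.
From mathcomp Require Import all_classical all_reals all_analysis complex.
From mathcomp Require Import zify ring lra.
Set Implicit Arguments. Unset Strict Implicit. Unset Printing Implicit Defensive.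
Import Order.TTheory GRing.Theory Num.Theory.
Local Open Scope ring_scope.
Local Open Scope complex_scope.

(* For alpha = k/3 the potential is beta at the vertices 3i and -beta/2 at the
   others, and the two inner vertices 3m+1, 3m+2 of each cell are joined with
   weight p in both directions, their only other neighbours being multiples of 3.
   Hence X is block diagonal with 2x2 blocks [[-beta/2, -p], [-p, -beta/2]],
   whose resolvent is explicit with determinant
   D(z) = (beta/2 + z)^2 - p^2.  Eliminating the cell (3i, 3i+1, 3i+2, 3i+3)
   couples 3i to 3i+3 through a single 2x2 resolvent, and the weights left on
   3i are exactly the transition probabilities of Delta^(l-1)_p at i, since
   p(3i, 3i +- 1) = p(i, i +- 1).  This gives phi = p(1-p)/D, and D vanishes
   exactly at the eigenvalues -beta/2 +- p of X. *)

Ltac decide_ifs := repeat match goal with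
 | |- context [if ?b then _ else _] =>
    lazymatch b with context [if _ then _ else _] => fail | _ => idtac end;
    first [ rewrite (_ : b = true); last by (apply/idP; lia)
          | rewrite (_ : b = false); last by (apply/negbTE; lia)
          | case: (boolP b) => ? ]
 end.

Ltac push_complex :=
  rewrite ?(rmorphN, rmorphB, rmorph1, rmorph0, rmorphD, rmorphM, fmorphV, rmorph_nat).

Lemma sum_kron_cond_mull (F : pzSemiRingType) (g : nat -> F) m (b : bool) (a : nat) (c : F) :
  \sum_(k < m) (if b && (k == a :> nat) then c else 0) * g k
    = if b && (a < m)%N then c * g a else 0.
Proof.
under eq_bigr => k _ do rewrite (fun_if (fun x => x * g k)) mul0r.
rewrite -big_mkcond; case: b => /=; last by rewrite big_pred0.
by rewrite (big_ord1_eq _ (fun k => c * g k)).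
Qed.

Lemma sum_kron_cond_mulr (F : pzSemiRingType) (g : nat -> F) m (b : bool) (a : nat) (c : F) :
  \sum_(k < m) g k * (if b && (k == a :> nat) then c else 0)
    = if b && (a < m)%N then g a * c else 0.
Proof.
under eq_bigr => k _ do rewrite (fun_if (fun x => g k * x)) mulr0.
rewrite -big_mkcond; case: b => /=; last by rewrite big_pred0.
by rewrite (big_ord1_eq _ (fun k => g k * c)).
Qed.

Lemma sum_kron_mull (F : pzSemiRingType) (g : nat -> F) m (a : nat) (c : F) :
  \sum_(k < m) (if k == a :> nat then c else 0) * g k = if (a < m)%N then c * g a else 0.
Proof. exact: (sum_kron_cond_mull g m true). Qed.

Lemma sum_kron_mulr (F : pzSemiRingType) (g : nat -> F) m (a : nat) (c : F) :
  \sum_(k < m) g k * (if k == a :> nat then c else 0) = if (a < m)%N then g a * c else 0.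
Proof. exact: (sum_kron_cond_mulr g m true). Qed.

(* Index j of X encodes the vertex 3(j/2) + 1 + (j %% 2) and index i of T the
   vertex 3i, so j and j' lie in the same cell iff j/2 = j'/2, and 3i is adjacent
   to the indices 2i and 2i - 1. *)
Section PairBlockSchur.
Variables (F : fieldType) (n : nat) (t d P q z : F) (u : nat -> F).

Definition pair_det : F := (d - z) ^+ 2 - P ^+ 2.

Definition pair_resolvent_entry (j j' : nat) : F :=
  if j == j' then (d - z) / pair_det
  else if (j %/ 2 == j' %/ 2)%N then P / pair_det else 0.

Definition pair_resolvent : 'M[F]_(2 * n) := \matrix_(j, j') pair_resolvent_entry j j'.

Hypothesis det_neq0 : pair_det != 0.

Variable X : 'M[F]_(2 * n).
Hypothesis X_entries : forall j j' : 'I_(2 * n),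
  X j j' = if j == j' :> nat then d else if (j %/ 2 == j' %/ 2)%N then - P else 0.

Lemma mulmx_pair_resolvent : (X - z%:M) *m pair_resolvent = 1%:M.
Proof.
apply/matrixP => j j'; rewrite [LHS]mxE.
have jn := ltn_ord j; have j'n := ltn_ord j'.
pose partner := if (j %% 2 == 0)%N then j.+1 else j.-1.
have row_j (k : 'I_(2 * n)) : (X - z%:M) j k =
    (if k == j :> nat then d - z else 0)
  + (if k == partner :> nat then - P else 0).
  have kn := ltn_ord k.
  by rewrite !mxE X_entries -val_eqE /= eq_sym mulrb /partner; decide_ifs; ring.
under eq_bigr => k _ do rewrite row_j mulrDl mxE.
rewrite big_split /= !(sum_kron_mull (pair_resolvent_entry ^~ j')).
rewrite /pair_resolvent_entry /partner !mxE -val_eqE /= mulrb.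
by decide_ifs; rewrite /pair_det; field; rewrite -/pair_det ?det_neq0.
Qed.

Lemma pair_block_unit : X - z%:M \in unitmx.
Proof. by case/mulmx1_unit: mulmx_pair_resolvent. Qed.

Lemma invmx_pair_block : invmx (X - z%:M) = pair_resolvent.
Proof.
by rewrite -[LHS]mulmx1 -mulmx_pair_resolvent mulmxA mulVmx ?pair_block_unit ?mul1mx.
Qed.

Lemma pair_block_not_eigenvalue : ~~ eigenvalue X z.
Proof.
apply/eigenvalueP => -[v v_eig]; apply/negP; rewrite negbK.
have v_ker : v *m (X - z%:M) = 0 by rewrite mulmxBr v_eig mul_mx_scalar subrr.
by rewrite -[v]mulmx1 -mulmx_pair_resolvent mulmxA v_ker mul0mx.
Qed.

Definition up_weight (i : nat) : F := if i == 0 then 1 else u i.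
Definition down_weight (i : nat) : F := if i == n then 1 else 1 - u i.

Hypothesis n_gt0 : (0 < n)%N.
Variables (T L : 'M[F]_n.+1) (B : 'M[F]_(n.+1, 2 * n)) (J : 'M[F]_(2 * n, n.+1)).
Hypothesis T_entries : forall i i' : 'I_n.+1, T i i' = if i == i' :> nat then t else 0.
Hypothesis B_entries : forall (i : 'I_n.+1) (j : 'I_(2 * n)), B i j =
    (if j == (2 * i)%N :> nat then - up_weight i else 0)
  + (if (0 < i)%N && (j == (2 * i)%N.-1 :> nat) then - down_weight i else 0).
Hypothesis J_entries : forall (j : 'I_(2 * n)) (i : 'I_n.+1), J j i =
    (if j == (2 * i)%N :> nat then - q else 0)
  + (if (0 < i)%N && (j == (2 * i)%N.-1 :> nat) then - q else 0).
Hypothesis L_entries : forall i i' : 'I_n.+1, L i i' =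
  if i == i' :> nat then 1
  else if i' == i.+1 :> nat then - up_weight i
  else if i'.+1 == i :> nat then - down_weight i else 0.

Definition pair_phi : F := P * q / pair_det.
Definition pair_psi : F := pair_phi - t + z + q * (d - z) / pair_det.

Lemma schur_pair_block :
  T - z%:M - B *m invmx (X - z%:M) *m J = pair_phi *: L - pair_psi%:M.
Proof.
rewrite invmx_pair_block; apply/matrixP => i i'.
have in_ := ltn_ord i; have i'n := ltn_ord i'.
pose BY j :=
    (if (2 * i < 2 * n)%N then - up_weight i * pair_resolvent_entry (2 * i)%N j else 0)
  + (if (0 < i)%N && ((2 * i)%N.-1 < 2 * n)%N
     then - down_weight i * pair_resolvent_entry (2 * i)%N.-1 j else 0).
have BY_entries (j : 'I_(2 * n)) : (B *m pair_resolvent) i j = BY j.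
  rewrite mxE; under eq_bigr => k _ do rewrite B_entries mxE mulrDl.
  by rewrite big_split /= (sum_kron_mull (pair_resolvent_entry ^~ j))
    (sum_kron_cond_mull (pair_resolvent_entry ^~ j)).
rewrite !mxE; under eq_bigr => j _ do rewrite BY_entries J_entries mulrDr.
rewrite big_split /= (sum_kron_mulr BY) (sum_kron_cond_mulr BY) /BY.
rewrite T_entries L_entries /pair_resolvent_entry /up_weight /down_weight /pair_psi /pair_phi.
by rewrite -val_eqE /= !mulrb; decide_ifs; ring.
Qed.

End PairBlockSchur.

Lemma pair_det_eq0 (F : fieldType) (d P z : F) :
  pair_det d P z = 0 <-> z = d - P \/ z = d + P.
Proof.
rewrite /pair_det (_ : _ - _ = (d - P - z) * (d + P - z)); last by ring.
split; first by move/eqP; rewrite mulf_eq0 !subr_eq0 => /orP[] /eqP <-; [left | right].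
by case=> ->; rewrite subrr ?mul0r ?mulr0.
Qed.

Section CosThirds.
Variable R : realType.

Lemma cos_2pi3 : cos (2 * pi / 3) = - 2^-1 :> R.
Proof.
have pi_gt0 := pi_gt0 R.
set c := cos _.
have c_neq1 : c != 1.
  apply/eqP; rewrite -cos0 => /cos_inj c_eq.
  have : 2 * pi / 3 = 0 :> R by apply: c_eq; rewrite in_itv /=; apply/andP; split; lra.
  lra.
have double : c ^+ 2 *+ 2 - 1 = c.
  rewrite -cos_mulr2n (_ : _ *+ 2 = - (2 * pi / 3) + pi *+ 2); last by rewrite !mulr2n; field.
  by rewrite cosD2pi cosN.
have : (c - 1) * (2 * c + 1) = 0.
  have -> : (c - 1) * (2 * c + 1) = (c ^+ 2 *+ 2 - 1) - c by ring.
  by rewrite double subrr.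
move/eqP; rewrite mulf_eq0 subr_eq0 (negbTE c_neq1) /= => /eqP.
lra.
Qed.

Lemma cos_2pi_nat_div3 (m : nat) :
  cos (2 * pi * m%:R / 3) = if (3 %| m)%N then 1 else - 2^-1 :> R.
Proof.
have r_lt3 : (m %% 3 < 3)%N by rewrite ltn_mod.
rewrite {1 2}(divn_eq m 3) dvdn_addr ?dvdn_mull // natrD natrM.
rewrite (_ : _ / 3 = 2 * pi * (m %% 3)%:R / 3 + pi *+ 2 *+ (m %/ 3)); last first.
  by rewrite -mulr_natr -mulr_natl mulr2n; field.
rewrite periodicn; last exact: cosD2pi.
case: (m %% 3)%N r_lt3 => [|[|[|//]]] _.
- by rewrite mulr0 mul0r cos0.
- by rewrite mulr1 cos_2pi3.
- rewrite (_ : _ / 3 = - (2 * pi / 3) + pi *+ 2); last by rewrite mulr2n; field.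
  by rewrite cosD2pi cosN cos_2pi3.
Qed.

Lemma cos_2pi_k3 (k x : nat) : (k = 1 \/ k = 2)%N ->
  cos (2 * pi * (k%:R / 3) * x%:R + 0) = if (3 %| x)%N then 1 else - 2^-1 :> R.
Proof.
move=> k12; rewrite addr0 (_ : _ * x%:R = 2 * pi * (k * x)%:R / 3); last first.
  by rewrite natrM; field.
rewrite cos_2pi_nat_div3; congr (if _ then _ else _).
by case: k12 => ->; rewrite ?mul1n // Gauss_dvdr.
Qed.
End CosThirds.

Lemma red3_mul3 x : red3 (3 * x) = red3 x.
Proof.
case: (posnP x) => [-> // | x_gt0].
by rewrite /red3 lognM // logn_prime // eqxx add1n expnS divnMl.
Qed.

Lemma red3_id x : ~~ (3 %| x)%N -> red3 x = x.
Proof. by move=> x_n3; rewrite /red3 lognE (negbTE x_n3) !andbF expn0 divn1. Qed.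

Lemma vmultE l (i : 'I_(3 ^ l).+1) : (@vmult l.+1 i : nat) = (3 * i)%N.
Proof. by rewrite /vmult inordK // expnS ltnS leq_mul2l /= -ltnS. Qed.

Lemma vnonE l (j : 'I_(2 * 3 ^ l)) : (@vnon l.+1 j : nat) = (3 * (j %/ 2) + 1 + j %% 2)%N.
Proof. by rewrite /vnon inordK //; case: j => j /=; rewrite expnS; lia. Qed.

Section SelfSimilarBlocks.
Variables (R : realType) (p beta : R).

Lemma pdownE x : pdown p x = 1 - pup p x.
Proof. by rewrite /pdown /pup; case: ifP => _ //; rewrite opprB addrC subrK. Qed.

Lemma pup_mul3 x : pup p (3 * x) = pup p x.
Proof. by rewrite /pup red3_mul3. Qed.

Lemma pup_pair_vertex j :
  pup p (3 * (j %/ 2) + 1 + j %% 2) = if (j %% 2 == 0)%N then p else 1 - p.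
Proof. by rewrite /pup red3_id; [decide_ifs | lia]. Qed.

Variable l : nat.
Let u x := (pup p x)%:C.

Lemma cplx_LapmatE (i i' : 'I_(3 ^ l).+1) : cplx (Lapmat l p) i i' =
  if i == i' :> nat then 1 else if i' == i.+1 :> nat then - up_weight u i
  else if i'.+1 == i :> nat then - down_weight (3 ^ l) u i else 0.
Proof.
rewrite !mxE /walk_ent !pdownE /up_weight /down_weight /u.
have := ltn_ord i; have := ltn_ord i' => ? ?.
by decide_ifs; push_complex; ring.
Qed.

Variable k : nat.
Hypothesis k12 : (k = 1 \/ k = 2)%N.

Let diag x := if (3 %| x)%N then beta else - (beta / 2).

Lemma walk_ent_cos_k3 N x y :
  walk_ent N p (fun x : nat => beta * cos (2 * pi * (k%:R / 3) * x%:R + 0)) x y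
  = walk_ent N p diag x y.
Proof.
by rewrite /walk_ent cos_2pi_k3 // (fun_if (fun c => beta * c)) mulr1 mulrN.
Qed.

Let H := Hmat l.+1 p beta (k%:R / 3) 0.

Lemma blkT_Hmat_k3 (i i' : 'I_(3 ^ l).+1) :
  cplx (blkT H) i i' = if i == i' :> nat then beta%:C else 0.
Proof.
rewrite !mxE walk_ent_cos_k3 !vmultE expnS /walk_ent /diag.
have := ltn_ord i; have := ltn_ord i' => ? ?.
by decide_ifs; push_complex.
Qed.

Lemma blkX_Hmat_k3 (j j' : 'I_(2 * 3 ^ l)) : cplx (blkX H) j j' =
  if j == j' :> nat then - (beta%:C / 2) else if (j %/ 2 == j' %/ 2)%N then - p%:C else 0.
Proof.
rewrite !mxE walk_ent_cos_k3 !vnonE expnS /walk_ent /diag !pdownE !pup_pair_vertex.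
have := ltn_ord j; have := ltn_ord j' => ? ?.
by decide_ifs; push_complex; ring.
Qed.

Lemma blkB_Hmat_k3 (i : 'I_(3 ^ l).+1) (j : 'I_(2 * 3 ^ l)) : cplx (blkB H) i j =
    (if j == (2 * i)%N :> nat then - up_weight u i else 0)
  + (if (0 < i)%N && (j == (2 * i).-1 :> nat) then - down_weight (3 ^ l) u i else 0).
Proof.
rewrite !mxE walk_ent_cos_k3 vmultE vnonE expnS /walk_ent /diag !pdownE pup_mul3.
rewrite /up_weight /down_weight /u.
have := ltn_ord i; have := ltn_ord j => ? ?.
by decide_ifs; push_complex; ring.
Qed.

Lemma blkJ_Hmat_k3 (j : 'I_(2 * 3 ^ l)) (i : 'I_(3 ^ l).+1) : cplx (blkJ H) j i =
    (if j == (2 * i)%N :> nat then - (1 - p%:C) else 0)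
  + (if (0 < i)%N && (j == (2 * i).-1 :> nat) then - (1 - p%:C) else 0).
Proof.
rewrite !mxE walk_ent_cos_k3 vmultE vnonE expnS /walk_ent /diag !pdownE pup_pair_vertex.
have := ltn_ord i; have := ltn_ord j => ? ?.
by decide_ifs; push_complex; ring.
Qed.

End SelfSimilarBlocks.

Section ExplicitFunctions.
Variables (R : realType) (p beta : R) (z : R[i]).
Hypothesis p01 : 0 < p < 1.

Let D := pair_det (- (beta%:C / 2)) p%:C z.

Let p_neq0 : p%:C != 0.
Proof. by case/andP: p01 => p_gt0 _; rewrite fmorph_eq0 gt_eqF. Qed.

Let q_neq0 : 1 - p%:C != 0.
Proof.
case/andP: p01 => _ p_lt1.
have : (1 - p)%:C != 0 :> R[i] by rewrite fmorph_eq0 subr_eq0 gt_eqF.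
by rewrite rmorphB rmorph1.
Qed.

(* No hypothesis on D: where D = 0 both sides are 0, as x / 0 = 0. *)
Lemma phi13E : phi13 p beta z = pair_phi (- (beta%:C / 2)) p%:C (1 - p%:C) z.
Proof.
rewrite /phi13 /pair_phi -/D.
have -> : 4 * p%:C ^+ 2 - (beta%:C + 2 * z) ^+ 2 = - 4 * D by rewrite /D /pair_det; field.
have [-> | D_neq0] := eqVneq D 0; first by rewrite mulr0 !invr0 !mulr0.
by field.
Qed.

Lemma phi13_eq0 : phi13 p beta z = 0 <-> D = 0.
Proof.
rewrite phi13E /pair_phi -/D; split => [/eqP | ->]; last by rewrite invr0 mulr0.
by rewrite !mulf_eq0 invr_eq0 (negbTE p_neq0) (negbTE q_neq0) => /eqP.
Qed.

Hypothesis D_neq0 : D != 0.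

Let D_factor : D = (beta%:C + 2 * p%:C + 2 * z) * (beta%:C - 2 * p%:C + 2 * z) / 4.
Proof. by rewrite /D /pair_det; field. Qed.

Let a_neq0 : beta%:C + 2 * p%:C + 2 * z != 0.
Proof. by apply: contraNneq D_neq0; rewrite D_factor => ->; rewrite !mul0r. Qed.

Let b_neq0 : beta%:C - 2 * p%:C + 2 * z != 0.
Proof. by apply: contraNneq D_neq0; rewrite D_factor => ->; rewrite mulr0 mul0r. Qed.

Lemma psi13E :
  psi13 p beta z = pair_psi beta%:C (- (beta%:C / 2)) p%:C (1 - p%:C) z.
Proof.
by rewrite /psi13 /pair_psi /pair_phi -/D D_factor; field; rewrite ?a_neq0 ?b_neq0 ?pnatr_eq0.
Qed.

Lemma psi13_div_phi13 : psi13 p beta z / phi13 p beta z = R13 p beta z.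
Proof.
rewrite /psi13 /phi13 /R13.
have -> : 4 * p%:C ^+ 2 - (beta%:C + 2 * z) ^+ 2
  = - ((beta%:C + 2 * p%:C + 2 * z) * (beta%:C - 2 * p%:C + 2 * z)) by ring.
by field; rewrite q_neq0 p_neq0 b_neq0 a_neq0 -oppr_eq0 opprB q_neq0.
Qed.
End ExplicitFunctions.

Theorem lemma3p7 (R : realType) (l k : nat) (p beta : R) :
  (1 <= l)%N -> (k = 1 \/ k = 2)%N -> 0 < p < 1 ->
  let H := Hmat l p beta (k%:R / 3) 0 in
  let E := exceptional H (phi13 p beta) in
  spectrally_similar_with H p (phi13 p beta) (psi13 p beta) E
  /\ (forall z : R[i], ~ E z -> psi13 p beta z / phi13 p beta z = R13 p beta z)
  /\ (forall z : R[i], E z <->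
        (z = - (beta%:C / 2) - p%:C \/ z = - (beta%:C / 2) + p%:C)).
Proof.
move=> l_ge1 k12 p01; case: l l_ge1 => // l _ H E.
have E_det z : E z <-> pair_det (- (beta%:C / 2)) p%:C z = 0.
  split=> [[eig | /(phi13_eq0 beta z p01) //] | /(phi13_eq0 beta z p01)]; last by right.
  apply/eqP; apply: contraTT eig => D_neq0.
  by have := pair_block_not_eigenvalue D_neq0 (blkX_Hmat_k3 p beta k12 (l := l)).
have D_neq0 z : ~ E z -> pair_det (- (beta%:C / 2)) p%:C z != 0.
  by move=> nE; apply/eqP => /E_det.
have n_gt0 : (0 < 3 ^ l)%N by rewrite expn_gt0.
split; [|split] => z; last exact: iff_trans (E_det z) (pair_det_eq0 _ _ _).
- move=> /D_neq0 Dz_neq0.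
  rewrite /schur (schur_pair_block Dz_neq0 (blkX_Hmat_k3 p beta k12 (l := l)) n_gt0
    (blkT_Hmat_k3 p beta k12 (l := l)) (blkB_Hmat_k3 p beta k12 (l := l))
    (blkJ_Hmat_k3 p beta k12 (l := l)) (cplx_LapmatE p (l := l))).
  by rewrite -phi13E -(psi13E Dz_neq0).
- by move=> /D_neq0; apply: psi13_div_phi13.
Qed.
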